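(* Let $n\geq 3$ and let $S$ be a nonempty subset of $[1,n-2]$. Writing $S+1=\{s+1:s\in S\}$, one has $$a_{\{1\}\cup(S+1)}(n+1)=a'_S(n).$$
   Context: $\Pi_n$ is the lattice of set partitions of $[n]$ ordered by refinement; a partition with $k$ blocks has rank $n-k$, and the nontrivial ranks are $1,\dots,n-2$. For $S\subseteq[1,n-2]$, the rank-selected subposet $\Pi_n(S)$ consists of the partitions whose rank lies in $S$; its maximal chains have exactly one element at each rank in $S$. $a_S(n)$ denotes the number of $S_n$-orbits on the set of maximal chains of $\Pi_n(S)$ (equivalently, the multiplicity of the trivial representation in the permutation representation of $S_n$ on these chains), and $a'_S(n)$ denotes the number of orbits of the subgroup $S_{n-1}\times S_1$ (permutations fixing $n$) on these maximal chains. *)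

From mathcomp Require Import all_boot all_fingroup.
Set Implicit Arguments. Unset Strict Implicit. Unset Printing Implicit Defensive.

(* A set partition of [n] is modelled as P : {set {set 'I_n}} with
   [partition P [set: 'I_n]] (blocks nonempty, disjoint, covering). *)

Definition refines (n : nat) (P Q : {set {set 'I_n}}) : bool :=
  [forall B in P, exists C in Q, B \subset C].

(* Maximal chains of the rank-selected subposet Pi_n(S), where S is a set of
   ranks (given as a predicate on nat).  A chain is encoded as a finite function
   c : rank -> partition, with c r the element of rank r (= n - #blocks) for each
   r in S, and c r = set0 (dummy) for r not in S; elements are ordered by
   refinement along increasing rank. *)
Definition chains (n : nat) (S : pred nat) : {set {ffun 'I_n -> {set {set 'I_n}}}} :=
  [set c : {ffun 'I_n -> {set {set 'I_n}}} |
     [forall r : 'I_n,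
        if S r then partition (c r) [set: 'I_n] && (#|c r| == n - r)
        else c r == set0]
     && [forall r : 'I_n, forall r' : 'I_n,
           [&& S r, S r' & r < r'] ==> refines (c r) (c r')]].

Definition act_part (n : nat) (g : {perm 'I_n}) (P : {set {set 'I_n}}) :
  {set {set 'I_n}} := [set [set g x | x in B] | B : {set 'I_n} in P].

Definition act_chain (n : nat) (g : {perm 'I_n})
  (c : {ffun 'I_n -> {set {set 'I_n}}}) : {ffun 'I_n -> {set {set 'I_n}}} :=
  [ffun r => act_part g (c r)].

Definition num_orbits (n : nat) (S : pred nat) (A : {set {perm 'I_n}}) : nat :=
  #|[set [set act_chain g c | g in A] | c in chains n S]|.

(* The subgroup S_{n-1} x S_1: permutations fixing the element n
   (the ordinal with value n-1). *)
Definition stab_last (n : nat) : {set {perm 'I_n}} :=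
  [set g : {perm 'I_n} | [forall x : 'I_n, (val x == n.-1) ==> (g x == x)]].

Definition a_S (S : pred nat) (n : nat) : nat := @num_orbits n S [set: {perm 'I_n}].
Definition a'_S (S : pred nat) (n : nat) : nat := @num_orbits n S (stab_last n).

Definition one_shift (S : pred nat) : pred nat :=
  fun r => (r == 1) || ((0 < r) && S r.-1).

From mathcomp Require Import all_boot all_fingroup zify.
Set Implicit Arguments. Unset Strict Implicit. Unset Printing Implicit Defensive.

(* Merge the last two points of [n+1] into the last point of [n].  Pulling
   back along this map identifies Pi_n with the interval of Pi_(n+1) above the
   atom whose only nontrivial block is {n, n+1}.  Every atom is conjugate to
   that one, so every orbit of chains of Pi_(n+1)({1} u (S+1)) contains the
   pullback of a chain of Pi_n(S), with ranks shifted by one.  Two pullbacks are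
   S_(n+1)-conjugate iff they are conjugate under the stabiliser of the atom,
   which acts on [n] as S_(n-1) x S_1. *)

Definition finer (T : finType) (P Q : {set {set T}}) : bool :=
  [forall B in P, exists C in Q, B \subset C].

Definition discrete (T : finType) : {set {set T}} := [set [set x] | x : T].

Definition preim_part (T U : finType) (f : T -> U) (Q : {set {set U}}) :
  {set {set T}} := [set f @^-1: B | B : {set U} in Q].

Definition fiber_closed (T U : finType) (f : T -> U) (Q : {set {set T}}) :=
  forall C x y, C \in Q -> x \in C -> f x = f y -> y \in C.

Section Preimage.
Variables (T U : finType) (f : T -> U).

Lemma cover_preim_part Q : cover (preim_part f Q) = f @^-1: cover Q.
Proof.
apply/setP=> x; rewrite inE; apply/bigcupP/bigcupP.
  by case=> _ /imsetP[B BQ ->]; rewrite inE => fxB; exists B.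
by case=> B BQ fxB; exists (f @^-1: B); [exact: imset_f | rewrite inE].
Qed.

Lemma fiber_closed_finer Q :
  trivIset Q -> finer (preim_part f (discrete U)) Q -> fiber_closed f Q.
Proof.
move=> tiQ /forall_inP finerQ C x y CQ xC fxy.
have /finerQ /exists_inP[C' C'Q sub] : f @^-1: [set f x] \in preim_part f (discrete U).
  exact/imset_f/imset_f.
have xC' : x \in C' by apply: (subsetP sub); rewrite !inE.
have yC' : y \in C' by apply: (subsetP sub); rewrite !inE fxy.
by rewrite -(def_pblock tiQ CQ xC) (def_pblock tiQ C'Q xC').
Qed.

Lemma preim_part_imset (Q : {set {set T}}) :
  fiber_closed f Q -> preim_part f [set f @: C | C : {set T} in Q] = Q.
Proof.
move=> closedQ; rewrite /preim_part -imset_comp -[RHS]imset_id.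
apply: eq_in_imset => C CQ /=; apply/setP => x; rewrite inE.
apply/imsetP/idP => [[y yC fxy] | xC]; last by exists x.
exact: (closedQ C y x).
Qed.

End Preimage.

Section PreimageSurjective.
Variables (T U : finType) (f : T -> U) (s : U -> T).
Hypothesis fK : cancel s f.

Lemma preimset_inj : injective (fun B : {set U} => f @^-1: B).
Proof. by move=> A B /setP AB; apply/setP=> u; have := AB (s u); rewrite !inE fK. Qed.

Lemma preimsetS_eq (A B : {set U}) : (f @^-1: A \subset f @^-1: B) = (A \subset B).
Proof.
apply/idP/idP; last exact: preimsetS.
by move=> /subsetP AB; apply/subsetP=> u uA; have := AB (s u); rewrite !inE fK; apply.
Qed.

Lemma card_preim_part Q : #|preim_part f Q| = #|Q|.
Proof. exact: card_imset preimset_inj. Qed.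

Lemma mem_preim_part Q (B : {set U}) : (f @^-1: B \in preim_part f Q) = (B \in Q).
Proof. exact: mem_imset preimset_inj. Qed.

Lemma preim_part_inj : injective (preim_part f).
Proof. by move=> P Q PQ; apply/setP=> B; rewrite -!mem_preim_part PQ. Qed.

Lemma trivIset_preim_part Q : trivIset (preim_part f Q) = trivIset Q.
Proof.
have disjoint_preim (A B : {set U}) :
    [disjoint f @^-1: A & f @^-1: B] = [disjoint A & B].
  by rewrite -!setI_eq0 -preimsetI -(preimset0 f) (inj_eq preimset_inj).
apply/trivIsetP/trivIsetP => tiQ.
  move=> A B AQ BQ AB; rewrite -disjoint_preim.
  by apply: tiQ; rewrite ?(inj_eq preimset_inj) ?mem_preim_part.
move=> _ _ /imsetP[A AQ ->] /imsetP[B BQ ->].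
by rewrite (inj_eq preimset_inj) disjoint_preim; apply: tiQ.
Qed.

Lemma partition_preim_part Q :
  partition (preim_part f Q) [set: T] = partition Q [set: U].
Proof.
rewrite /partition cover_preim_part -(preimsetT f) (inj_eq preimset_inj).
by rewrite trivIset_preim_part -(preimset0 f) mem_preim_part.
Qed.

Lemma finer_preim_part P Q : finer (preim_part f P) (preim_part f Q) = finer P Q.
Proof.
apply/forall_inP/forall_inP => PQ B BP.
  have/exists_inP[_ /imsetP[C CQ ->]] := PQ _ (imset_f _ BP).
  by rewrite preimsetS_eq => BC; apply/exists_inP; exists C.
case/imsetP: BP => {}B BP ->; have/exists_inP[C CQ BC] := PQ _ BP.
by apply/exists_inP; exists (f @^-1: C); [exact: imset_f | rewrite preimsetS_eq].
Qed.

End PreimageSurjective.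

Lemma preim_part_comp (T U V : finType) (f : T -> U) (k : U -> V) P :
  preim_part f (preim_part k P) = preim_part (k \o f) P.
Proof.
by rewrite /preim_part -imset_comp; apply: eq_imset => B; apply/setP => x; rewrite !inE.
Qed.

Lemma eq_preim_part (T U : finType) (f g : T -> U) :
  f =1 g -> preim_part f =1 preim_part g.
Proof. by move=> fg P; apply: eq_imset => B; apply: eq_preimset. Qed.

Lemma preim_part_id (T : finType) (P : {set {set T}}) : preim_part id P = P.
Proof.
by rewrite /preim_part -[RHS]imset_id; apply: eq_imset => B; apply/setP => x; rewrite inE.
Qed.

Section Discrete.
Variable T : finType.

Lemma card_discrete : #|discrete T| = #|T|.
Proof. exact/card_imset/set1_inj. Qed.

Lemma partition_discrete : partition (discrete T) [set: T].
Proof.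
apply/and3P; split.
- apply/eqP/setP => x; rewrite inE; apply/bigcupP.
  by exists [set x]; [exact: imset_f | rewrite inE].
- apply/trivIsetP => _ _ /imsetP[x _ ->] /imsetP[y _ ->] xy.
  by rewrite disjoints1 inE; apply: contra xy => /eqP ->.
- by apply/imsetP => [[x _ /esym /setP /(_ x)]]; rewrite !inE eqxx.
Qed.

Lemma discrete_finer (Q : {set {set T}}) : cover Q = [set: T] -> finer (discrete T) Q.
Proof.
move=> coverQ; apply/forall_inP => _ /imsetP[x _ ->].
have : x \in cover Q by rewrite coverQ inE.
by case/bigcupP => C CQ xC; apply/exists_inP; exists C; rewrite // sub1set.
Qed.

Lemma partition_nontrivial_block (R : {set {set T}}) :
  partition R [set: T] -> #|R| < #|T| -> exists2 B, B \in R & 1 < #|B|.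
Proof.
move=> partR ltRT; apply/exists_inP; apply: contraLR ltRT.
rewrite negb_exists_in -leqNgt => /forall_inP noBig.
rewrite -cardsT (card_partition partR) -sum1_card.
by apply: leq_sum => B BR; rewrite leqNgt noBig.
Qed.

Lemma partition_card_discrete (Q : {set {set T}}) :
  partition Q [set: T] -> #|Q| = #|T| -> Q = discrete T.
Proof.
move=> partQ cardQ; have Q0 : set0 \notin Q by case/and3P: partQ.
have B_gt0 B : B \in Q -> 0 < #|B|.
  by move=> BQ; rewrite card_gt0; apply: contraNneq Q0 => <-.
have : \sum_(B in Q) (#|B| - 1) == 0.
  by rewrite sumnB ?sum1_card -?(card_partition partQ) ?cardsT ?cardQ ?subnn.
rewrite sum_nat_eq0 => /forall_inP B_le1.
apply/eqP; rewrite eqEcard card_discrete cardQ leqnn andbT; apply/subsetP => B BQ.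
have /cards1P[x ->] : #|B| == 1 by rewrite eqn_leq B_gt0 // andbT -subn_eq0 B_le1.
exact: imset_f.
Qed.

End Discrete.

Section PermutationAction.
Variable n : nat.
Implicit Types (g h : {perm 'I_n}) (P Q : {set {set 'I_n}})
  (c : {ffun 'I_n -> {set {set 'I_n}}}).

Lemma act_partE g P : act_part g P = preim_part g^-1%g P.
Proof. by apply: eq_imset => B; rewrite -{1}(invgK g) im_permV. Qed.

Lemma act_part1 P : act_part 1 P = P.
Proof.
by rewrite act_partE invg1 -[RHS]preim_part_id; apply: eq_preim_part => x; rewrite perm1.
Qed.

Lemma act_partM g h P : act_part (g * h) P = act_part h (act_part g P).
Proof.
by rewrite !act_partE preim_part_comp; apply: eq_preim_part => x; rewrite invMg permM.
Qed.

Lemma act_part0 g : act_part g set0 = set0.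
Proof. exact: imset0. Qed.

Lemma partition_act_part g P :
  partition (act_part g P) [set: 'I_n] = partition P [set: 'I_n].
Proof. by rewrite act_partE (partition_preim_part (permK g)). Qed.

Lemma card_act_part g P : #|act_part g P| = #|P|.
Proof. by rewrite act_partE (card_preim_part (permK g)). Qed.

Lemma finer_act_part g P Q : finer (act_part g P) (act_part g Q) = finer P Q.
Proof. by rewrite !act_partE (finer_preim_part (permK g)). Qed.

Lemma act_part_discrete g : act_part g (discrete 'I_n) = discrete 'I_n.
Proof.
apply: partition_card_discrete; first by rewrite partition_act_part partition_discrete.
by rewrite card_act_part card_discrete.
Qed.

Lemma act_chain1 c : act_chain (1 : {perm 'I_n}) c = c.
Proof. by apply/ffunP => r; rewrite ffunE act_part1. Qed.

Lemma act_chainM c g h : act_chain (g * h) c = act_chain h (act_chain g c).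
Proof. by apply/ffunP => r; rewrite !ffunE act_partM. Qed.

Definition chain_action :=
  @TotalAction _ _ (fun c g => act_chain g c) act_chain1 act_chainM.

Lemma num_orbitsE S (A : {set {perm 'I_n}}) :
  num_orbits S A = #|orbit chain_action A @: chains n S|.
Proof. by []. Qed.

End PermutationAction.

Lemma chainsP n (S : pred nat) (c : {ffun 'I_n -> {set {set 'I_n}}}) :
  reflect [/\ forall r : 'I_n, S r -> partition (c r) [set: 'I_n] /\ #|c r| = n - r,
              forall r : 'I_n, ~~ S r -> c r = set0
            & forall r r' : 'I_n, S r -> S r' -> r < r' -> finer (c r) (c r')]
    (c \in chains n S).
Proof.
rewrite inE; apply: (iffP andP) => [[/forallP rankc /forallP finerc] | [rankc c0 finerc]].
  split=> [r Sr | r /negbTE Sr | r r' Sr Sr' rr'].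
  - by have := rankc r; rewrite Sr => /andP[-> /eqP ->].
  - by have := rankc r; rewrite Sr => /eqP.
  - by have /forallP/(_ r') := finerc r; rewrite Sr Sr' rr'.
split; apply/forallP => r.
  by case: ifP => Sr; [case: (rankc r Sr) => -> ->; rewrite eqxx | rewrite c0 ?Sr].
by apply/forallP => r'; apply/implyP => /and3P[Sr Sr' rr']; apply: finerc.
Qed.

Lemma act_chain_chains n S (g : {perm 'I_n}) c :
  c \in chains n S -> act_chain g c \in chains n S.
Proof.
case/chainsP => rankc c0 finerc; apply/chainsP; split=> [r Sr | r Sr | r r' Sr Sr' rr'].
- by rewrite ffunE partition_act_part card_act_part; apply: rankc.
- by rewrite ffunE c0 ?act_part0.
- by rewrite !ffunE finer_act_part; apply: finerc.
Qed.

Lemma stab_lastE n : stab_last n.+1 = 'C[ord_max | 'P]%g.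
Proof.
apply/setP => g; rewrite inE; apply/forallP/astab1P => /= [fix_max | gmax x].
  by have := fix_max ord_max; rewrite /= eqxx /= => /eqP.
apply/implyP => /eqP xmax; have -> : x = ord_max by apply: val_inj.
by rewrite -[X in _ == X]gmax.
Qed.

Lemma exists_perm_pair (T : finType) (a b x y : T) :
  a != b -> x != y -> exists g : {perm T}, g a = x /\ g b = y.
Proof.
move=> ab xy; pose g1 := tperm a x; have g1b_x : g1 b != x.
  by rewrite -[x in _ != x](tpermL a x) (inj_eq perm_inj) eq_sym.
exists (g1 * tperm (g1 b) y)%g; rewrite !permM tpermL /g1 tpermL.
by split=> //; rewrite tpermD // eq_sym.
Qed.

Lemma leq_imset_rel (T U V : finType) (D : {set T}) (f : T -> U) (g : T -> V) :
  {in D &, forall x y, g x = g y -> f x = f y} -> #|f @: D| <= #|g @: D|.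
Proof.
move=> gf; case: (set_0Vmem D) => [-> | [x0 x0D]]; first by rewrite imset0 cards0.
pose k v := f (odflt x0 [pick x in D | g x == v]).
apply: leq_trans (leq_imset_card k (g @: D)); apply: subset_leq_card.
apply/subsetP => _ /imsetP[y yD ->]; apply/imsetP; exists (g y); first exact: imset_f.
rewrite /k; case: pickP => [x /andP[xD /eqP gxy] | /(_ y)]; last by rewrite yD eqxx.
by rewrite (gf x y).
Qed.

Lemma card_imset_rel (T U V : finType) (D : {set T}) (f : T -> U) (g : T -> V) :
  {in D &, forall x y, (f x == f y) = (g x == g y)} -> #|f @: D| = #|g @: D|.
Proof.
move=> fg; apply/eqP; rewrite eqn_leq !leq_imset_rel // => x y xD yD /eqP.
  by rewrite fg // => /eqP.
by rewrite -fg // => /eqP.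
Qed.

Lemma card_orbits_transfer (aT1 aT2 : finGroupType) (T1 T2 : finType)
    (to1 : {action aT1 &-> T1}) (to2 : {action aT2 &-> T2})
    (G1 : {group aT1}) (G2 : {group aT2}) (C1 : {set T1}) (C2 : {set T2})
    (F : T2 -> T1) :
  {in C2, forall x, F x \in C1} ->
  {in C1, forall y, exists2 x, x \in C2 & F x \in orbit to1 G1 y} ->
  {in C2 &, forall x y, (F x \in orbit to1 G1 (F y)) = (x \in orbit to2 G2 y)} ->
  #|orbit to1 G1 @: C1| = #|orbit to2 G2 @: C2|.
Proof.
move=> FC1 FC1_onto F_orbit.
have -> : orbit to1 G1 @: C1 = (orbit to1 G1 \o F) @: C2.
  apply/eqP; rewrite eqEsubset; apply/andP; split; apply/subsetP => _ /imsetP[y yC ->].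
    by case: (FC1_onto y yC) => x xC /orbit_eqP Fxy; apply/imsetP; exists x.
  by apply/imsetP; exists (F y); first exact: FC1.
apply: card_imset_rel => x y xC yC /=.
by rewrite !(sameP eqP orbit_eqP) F_orbit.
Qed.

Section Collapse.
Variables (m : nat) (S : pred nat).
Hypothesis S_pos : forall s, S s -> 0 < s.

Local Notation chain n := {ffun 'I_n -> {set {set 'I_n}}}.
Implicit Types c : chain m.+1.

Definition squash (x : 'I_m.+2) : 'I_m.+1 := inord (minn x m).
Definition embed (u : 'I_m.+1) : 'I_m.+2 := lift ord_max u.
Definition rank1 : 'I_m.+2 := inord 1.

Lemma val_squash x : squash x = minn x m :> nat.
Proof. by rewrite inordK // ltnS geq_minr. Qed.

Lemma val_embed u : embed u = u :> nat.
Proof. exact: lift_max. Qed.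

Lemma val_rank1 : rank1 = 1 :> nat.
Proof. by rewrite inordK. Qed.

Lemma embedK : cancel embed squash.
Proof.
by move=> u; apply: ord_inj; rewrite /= val_squash val_embed; have := ltn_ord u; lia.
Qed.

Lemma embed_max_neq : embed ord_max != ord_max.
Proof. by apply/eqP => /(congr1 (@nat_of_ord _)); rewrite val_embed /=; lia. Qed.

Lemma squash_max : squash ord_max = ord_max.
Proof. by apply: ord_inj; rewrite /= val_squash /=; lia. Qed.

Lemma squash_fiber x y : squash x = squash y -> x != y -> (m <= x) && (m <= y).
Proof.
move=> /(congr1 val); rewrite /= !val_squash => sxy xy.
have {}xy : (x : nat) != y by [].
by have := ltn_ord x; have := ltn_ord y; lia.
Qed.

Definition atom_last : {set {set 'I_m.+2}} := preim_part squash (discrete 'I_m.+1).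

Lemma fiber_closed_squash (Q : {set {set 'I_m.+2}}) B :
  trivIset Q -> B \in Q -> embed ord_max \in B -> ord_max \in B ->
  fiber_closed squash Q.
Proof.
move=> tiQ BQ mB m1B C x y CQ xC sxy; have [<- // | xy] := eqVneq x y.
have inB (z : 'I_m.+2) : m <= z -> z \in B.
  move=> mz; have [zm | zm1] : z = m :> nat \/ z = m.+1 :> nat by have := ltn_ord z; lia.
    by rewrite (_ : z = embed ord_max) //; apply: ord_inj; rewrite val_embed.
  by rewrite (_ : z = ord_max) //; apply: ord_inj.
case/andP: (squash_fiber sxy xy) => /inB xB /inB yB.
by rewrite -(def_pblock tiQ CQ xC) (def_pblock tiQ BQ xB).
Qed.

Lemma squash_closed_atom (Q : {set {set 'I_m.+2}}) :
  partition Q [set: 'I_m.+2] -> #|Q| = m.+1 -> fiber_closed squash Q -> Q = atom_last.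
Proof.
move=> partQ cardQ /preim_part_imset QE; rewrite -QE /atom_last; congr preim_part.
apply: partition_card_discrete.
  by rewrite -(partition_preim_part embedK) QE.
by rewrite -(card_preim_part embedK) QE cardQ card_ord.
Qed.

Lemma atom_conj (R : {set {set 'I_m.+2}}) :
  partition R [set: 'I_m.+2] -> #|R| = m.+1 ->
  exists g : {perm 'I_m.+2}, act_part g R = atom_last.
Proof.
move=> partR cardR.
have [|B BR /card_gt1P[a [b [aB bB ab]]]] := partition_nontrivial_block partR.
  by rewrite cardR card_ord.
have [g [ga gb]] := exists_perm_pair ab embed_max_neq; exists g.
apply: squash_closed_atom; rewrite ?partition_act_part ?card_act_part //.
apply: (@fiber_closed_squash _ [set g x | x in B]).
- by have := partR; rewrite -(partition_act_part g) => /partition_trivIset.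
- exact: imset_f.
- by rewrite -ga imset_f.
- by rewrite -gb imset_f.
Qed.

Definition lift_chain (c : chain m.+1) : chain m.+2 :=
  [ffun r : 'I_m.+2 => if r == 1 :> nat then atom_last
     else if one_shift S r then preim_part squash (c (inord r.-1)) else set0].

Lemma val_shift (s : 'I_m.+1) : (inord s.+1 : 'I_m.+2) = s.+1 :> nat.
Proof. by rewrite inordK // ltnS. Qed.

Lemma one_shift_shift (s : 'I_m.+1) : S s -> one_shift S (inord s.+1 : 'I_m.+2).
Proof. by move=> Ss; rewrite /one_shift val_shift /= Ss orbT. Qed.

Lemma one_shiftP (r : 'I_m.+2) :
  one_shift S r -> r = rank1 \/ exists2 s : 'I_m.+1, S s & r = inord s.+1.
Proof.
case/orP => [/eqP r1 | /andP[r_gt0 Sr]]; [left | right].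
  by apply: ord_inj; rewrite /= val_rank1.
have r_le : r.-1 < m.+1 by have := ltn_ord r; lia.
exists (Ordinal r_le) => //; apply: ord_inj; rewrite val_shift /=; lia.
Qed.

Lemma lift_chain_rank1 c : lift_chain c rank1 = atom_last.
Proof. by rewrite ffunE val_rank1. Qed.

Lemma lift_chain_shift c (s : 'I_m.+1) :
  S s -> lift_chain c (inord s.+1) = preim_part squash (c s).
Proof.
move=> Ss; have := S_pos Ss => s_gt0.
rewrite ffunE val_shift /one_shift /= Ss; have -> : (s.+1 == 1) = false by lia.
by rewrite inord_val.
Qed.

Lemma lift_chain_chains c :
  c \in chains m.+1 S -> lift_chain c \in chains m.+2 (one_shift S).
Proof.
case/chainsP => rankc c0 finerc; apply/chainsP; split.
- move=> r /one_shiftP[-> | [s Ss ->]].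
    rewrite lift_chain_rank1 (partition_preim_part embedK) (card_preim_part embedK).
    by rewrite partition_discrete card_discrete card_ord val_rank1.
  rewrite lift_chain_shift // (partition_preim_part embedK) (card_preim_part embedK).
  by rewrite val_shift subSS; apply: rankc.
- move=> r; rewrite /one_shift negb_or => /andP[r1 Sr].
  by rewrite ffunE /one_shift (negbTE r1) (negbTE Sr).
move=> r r' /one_shiftP[-> | [s Ss ->]] /one_shiftP[-> | [s' Ss' ->]];
  rewrite ?val_rank1 ?val_shift //.
- move=> _; rewrite lift_chain_rank1 lift_chain_shift // (finer_preim_part embedK).
  by apply: discrete_finer; case: (rankc s' Ss') => /cover_partition.
- rewrite ltnS => ss'; rewrite !lift_chain_shift // (finer_preim_part embedK).
  exact: finerc.
Qed.

Lemma lift_chain_chainsK c :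
  (forall s : 'I_m.+1, ~~ S s -> c s = set0) ->
  lift_chain c \in chains m.+2 (one_shift S) -> c \in chains m.+1 S.
Proof.
move=> c0 /chainsP[rankc _ finerc]; apply/chainsP; split=> // [s Ss | s s' Ss Ss' ss'].
  have [] := rankc _ (one_shift_shift Ss).
  rewrite lift_chain_shift // (partition_preim_part embedK) (card_preim_part embedK).
  by rewrite val_shift.
rewrite -(finer_preim_part embedK) -!lift_chain_shift //.
by apply: finerc; rewrite ?one_shift_shift // !val_shift.
Qed.

Lemma lift_chain_inj : {in chains m.+1 S &, injective lift_chain}.
Proof.
move=> c c' /chainsP[_ c0 _] /chainsP[_ c'0 _] cc'; apply/ffunP => s.
have [Ss | nSs] := boolP (S s); last by rewrite c0 ?c'0.
by apply: (preim_part_inj embedK); rewrite -!lift_chain_shift // cc'.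
Qed.

Lemma act_lift_chain (g : {perm 'I_m.+2}) (h : {perm 'I_m.+1}) c :
  (forall x, squash (g x) = h (squash x)) ->
  act_chain g (lift_chain c) = lift_chain (act_chain h c).
Proof.
move=> gh; have act_preim P :
    act_part g (preim_part squash P) = preim_part squash (act_part h P).
  rewrite !act_partE !preim_part_comp; apply: eq_preim_part => x /=.
  by apply: (@perm_inj _ h); rewrite -gh !permKV.
apply/ffunP => r; rewrite !ffunE.
case: ifP => _; first by rewrite act_preim act_part_discrete.
by case: ifP => _; rewrite ?act_preim ?act_part0.
Qed.

Lemma lift_chain_atom (c : chain m.+2) :
  c \in chains m.+2 (one_shift S) -> c rank1 = atom_last ->
  exists2 c', c' \in chains m.+1 S & lift_chain c' = c.
Proof.
move=> cC c1; have /chainsP[rankc c0 finerc] := cC.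
pose c' := [ffun s : 'I_m.+1 =>
  if S s then [set squash @: C | C : {set 'I_m.+2} in c (inord s.+1)] else set0].
have c'E : lift_chain c' = c.
  apply/ffunP => r; have [Sr | nSr] := boolP (one_shift S r); last first.
    rewrite ffunE c0 // (negbTE nSr).
    by case: ifP => // /eqP r1; rewrite /one_shift r1 in nSr.
  case/one_shiftP: Sr => [-> | [s Ss ->]]; first by rewrite lift_chain_rank1.
  rewrite lift_chain_shift // ffunE Ss preim_part_imset //.
  have [partcs _] := rankc _ (one_shift_shift Ss).
  have : finer atom_last (c (inord s.+1)).
    rewrite -c1; apply: finerc; rewrite ?one_shift_shift //.
      by rewrite /one_shift val_rank1.
    by rewrite val_rank1 val_shift ltnS S_pos.
  exact: fiber_closed_finer (partition_trivIset partcs).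
exists c' => //; apply: lift_chain_chainsK; last by rewrite c'E.
by move=> s /negbTE nSs; rewrite ffunE nSs.
Qed.

Lemma lift_chain_onto (c : chain m.+2) :
  c \in chains m.+2 (one_shift S) ->
  exists2 c', c' \in chains m.+1 S &
    lift_chain c' \in orbit (chain_action m.+2) [set: {perm 'I_m.+2}] c.
Proof.
move=> cC; have /chainsP[rankc _ _] := cC.
have [] := rankc rank1; first by rewrite /one_shift val_rank1.
rewrite val_rank1 subn1 => /atom_conj /[apply] -[g gc1].
have gc_rank1 : act_chain g c rank1 = atom_last by rewrite ffunE.
have [c' c'C c'E] := lift_chain_atom (act_chain_chains g cC) gc_rank1.
by exists c' => //; rewrite c'E; apply/orbitP; exists g; rewrite ?inE.
Qed.

Lemma squash_act_atom (g : {perm 'I_m.+2}) x y :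
  act_part g atom_last = atom_last -> squash x = squash y -> squash (g x) = squash (g y).
Proof.
move=> g_atom sxy.
have : [set g z | z in squash @^-1: [set squash x]] \in atom_last.
  by rewrite -[in X in _ \in X]g_atom; apply/imset_f/imset_f/imset_f.
case/imsetP => _ /imsetP[u _ ->] fiberE.
have gx : g x \in squash @^-1: [set u] by rewrite -fiberE imset_f // !inE.
have gy : g y \in squash @^-1: [set u] by rewrite -fiberE imset_f // !inE sxy.
by move: gx gy; rewrite !inE => /eqP -> /eqP ->.
Qed.

Lemma squash_perm_restrict (g : {perm 'I_m.+2}) :
  act_part g atom_last = atom_last ->
  exists2 h : {perm 'I_m.+1}, h ord_max = ord_max & forall x, squash (g x) = h (squash x).
Proof.
move=> g_atom; have g'_atom : act_part g^-1 atom_last = atom_last.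
  by rewrite -{1}g_atom -act_partM mulgV act_part1.
pose h u := squash (g (embed u)).
have h_inj : injective h.
  by move=> u v /(squash_act_atom g'_atom); rewrite !permK !embedK.
exists (perm h_inj) => [|x]; last by rewrite permE; apply/squash_act_atom; rewrite ?embedK.
rewrite permE /h; apply: ord_inj; rewrite val_squash /=.
have g_max_neq : g (embed ord_max) != g ord_max.
  by rewrite (inj_eq perm_inj) embed_max_neq.
have smax : squash (embed ord_max) = squash ord_max by rewrite embedK squash_max.
by have /andP[] := squash_fiber (squash_act_atom g_atom smax) g_max_neq; lia.
Qed.

Lemma squash_perm_extend (h : {perm 'I_m.+1}) :
  h ord_max = ord_max ->
  exists g : {perm 'I_m.+2}, forall x, squash (g x) = h (squash x).
Proof.
move=> h_max; exists (lift_perm ord_max ord_max h) => x.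
have [u -> | ->] := unliftP ord_max x; last by rewrite lift_perm_id squash_max h_max.
by rewrite lift_perm_lift -!/(embed _) !embedK.
Qed.

Lemma lift_chain_orbit c c' :
  c \in chains m.+1 S -> c' \in chains m.+1 S ->
  (lift_chain c \in orbit (chain_action m.+2) [set: {perm 'I_m.+2}] (lift_chain c'))
    = (c \in orbit (chain_action m.+1) 'C[ord_max | 'P] c').
Proof.
move=> cC c'C; apply/orbitP/orbitP => /= [[g _ gc'] | [h /astab1P h_max <-]].
  have g_atom : act_part g atom_last = atom_last.
    by move/ffunP/(_ rank1): gc'; rewrite ffunE !lift_chain_rank1.
  have [h h_max gh] := squash_perm_restrict g_atom.
  exists h; first exact/astab1P.
  by apply: lift_chain_inj; rewrite ?act_chain_chains // -(act_lift_chain _ gh).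
have [g gh] := squash_perm_extend h_max.
by exists g; rewrite ?inE // (act_lift_chain _ gh).
Qed.

End Collapse.

Theorem mainTheorem2 (n : nat) (S : pred nat) :
  3 <= n ->
  (exists s, S s) ->
  (forall s, S s -> (1 <= s) && (s <= n - 2)) ->
  a_S (one_shift S) n.+1 = a'_S S n.
Proof.
case: n => [//|m] _ _ S_range; have S_pos s : S s -> 0 < s by case/S_range/andP.
rewrite /a_S /a'_S !num_orbitsE stab_lastE.
apply: (@card_orbits_transfer _ _ _ _ _ _ [set: _]%G 'C[ord_max | 'P]%G _ _ (lift_chain S)).
- exact: lift_chain_chains.
- exact: lift_chain_onto.
- exact: lift_chain_orbit.
Qed.
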